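(* For every $t\in\mathbb Z$, the process $(\overline{\bm Z}^{(t)}_s)_{s\ge t}$ has the distribution of a random walk started at $0$ whose step distribution is that of the increments of $\overline{\bm Y}$ (which is the same as that of $-\overline{\bm X}$).
   Context: Let $\nu=\frac12\delta_{(1,-1)}+\sum_{i,j\ge0}2^{-i-j-3}\delta_{(-i,j)}$ on $\mathbb Z^2$ and $\overline{\bm W}=(\overline{\bm X},\overline{\bm Y})=(\overline{\bm W}_t)_{t\in\mathbb Z}$ a two-sided random walk with i.i.d. steps of law $\nu$ and $\overline{\bm W}_0=(0,0)$. Its coalescent-walk process $\overline{\bm Z}=\{\overline{\bm Z}^{(t)}\}_{t\in\mathbb Z}$ is defined by $\overline{\bm Z}^{(t)}_t=0$ and, for $\ell\ge t$: if $\overline{\bm W}_{\ell+1}-\overline{\bm W}_\ell=(1,-1)$ then $\overline{\bm Z}^{(t)}_{\ell+1}-\overline{\bm Z}^{(t)}_\ell=-1$; if $\overline{\bm W}_{\ell+1}-\overline{\bm W}_\ell=(-i,j)$ with $i,j\ge0$, the increment is $j$ if $\overline{\bm Z}^{(t)}_\ell\ge0$, $i$ if $\overline{\bm Z}^{(t)}_\ell<-i$, and $j-\overline{\bm Z}^{(t)}_\ell$ if $-i\le\overline{\bm Z}^{(t)}_\ell<0$. *)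

From HB Require Import structures.
From mathcomp Require Import all_boot all_order all_algebra.
From mathcomp Require Import all_classical all_reals all_analysis.
Set Implicit Arguments. Unset Strict Implicit. Unset Printing Implicit Defensive.
Import Order.TTheory GRing.Theory Num.Theory.
Local Open Scope ring_scope.
Local Open Scope classical_set_scope.

Definition nu (R : realType) (w : int * int) : R :=
  if w == (1, -1) then 2^-1
  else if (w.1 <= 0) && (0 <= w.2) then
    (2^-1) ^+ (`|w.1|%N + `|w.2|%N + 3)
  else 0.

(* One step of the coalescent-walk dynamics: given the increment
   w = W_{l+1} - W_l and the current value z = Z_l, returns Z_{l+1}. *)
Definition zstep (w : int * int) (z : int) : int :=
  if w == (1, -1) then z - 1
  else
    let i := - w.1 in
    let j := w.2 in
    if 0 <= z then z + j
    else if z < - i then z + i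
    else z + (j - z).

(* coal inc t n = Z^{(t)}_{t+n}, where inc l = W_{l+1} - W_l. *)
Fixpoint coal (inc : int -> int * int) (t : int) (n : nat) : int :=
  match n with
  | 0%N => 0
  | n'.+1 => zstep (inc (t + n'%:Z)) (coal inc t n')
  end.

Definition incW (T : Type) (X Y : int -> T -> int) (om : T) (l : int) : int * int :=
  (X (l + 1) om - X l om, Y (l + 1) om - Y l om).

Definition iid_steps_nu (d : measure_display) (T : measurableType d)
    (R : realType) (P : probability T R) (X Y : int -> T -> int) : Prop :=
  (forall (l : int) (v : int * int),
      measurable [set om | incW X Y om l = v]) /\
  (forall (s : seq int) (v : seq (int * int)),
      uniq s -> size v = size s ->
      P [set om | forall k, (k < size s)%N ->
                   incW X Y om (nth 0 s k) = nth (0, 0) v k]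
      = (\prod_(k < size s) nu R (nth (0, 0) v k))%:E).

From HB Require Import structures.
From mathcomp Require Import all_boot all_order all_algebra.
From mathcomp Require Import all_classical all_reals all_analysis.
From mathcomp Require Import zify ring.
Set Implicit Arguments. Unset Strict Implicit. Unset Printing Implicit Defensive.
Import Order.TTheory GRing.Theory Num.Theory.
Local Open Scope ring_scope.
Local Open Scope classical_set_scope.

(* Given Z_l = z, the next increment Z_{l+1} - Z_l is a function of the fresh
   step w = W_{l+1} - W_l alone.  Outside the point (1, -1), nu charges the
   quadrant {(-i, j) | i, j >= 0} with a weight depending only on i + j, so it
   is invariant under the bijection [relabel c] of this quadrant which, for
   c = max(0, -z), swaps i and j when j < c and translates by (-c, -c)
   otherwise; after this relabelling the increment of Z is exactly j, the
   increment of Y.  Independence of the steps at distinct times then factorises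
   the probability of any path of Z into one-step probabilities.  The law of Y
   equals that of -X by the nu-invariant symmetry (x, y) -> (-y, -x). *)

Definition quadrant (w : int * int) : bool := (w.1 <= 0) && (0 <= w.2).

Lemma nu_support (R : realType) (w : int * int) :
  nu R w != 0 -> w = (1, -1) \/ quadrant w.
Proof.
have [->|/negbTE ne] := eqVneq w (1, -1); first by left.
by rewrite /nu ne /quadrant; case: ifP => [q _|_]; [right | rewrite eqxx].
Qed.

Lemma nu_quadrant (R : realType) (w : int * int) : quadrant w ->
  nu R w = (2^-1) ^+ (`|w.1|%N + `|w.2|%N + 3).
Proof.
case: w => a b /andP[/= a0 b0]; rewrite /nu /=.
have -> : ((a, b) == (1, -1)) = false by rewrite xpair_eqE; lia.
by rewrite a0 b0.
Qed.

Lemma nu_ge0 (R : realType) (w : int * int) : 0 <= nu R w.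
Proof.
rewrite /nu; case: ifP => _; first by rewrite invr_ge0.
by case: ifP => _ //; rewrite exprn_ge0 // invr_ge0.
Qed.

Definition swap_neg (w : int * int) : int * int := (- w.2, - w.1).

Lemma swap_negK : involutive swap_neg.
Proof. by case=> a b; rewrite /swap_neg /= !opprK. Qed.

Lemma nu_swap_neg (R : realType) (w : int * int) : nu R (swap_neg w) = nu R w.
Proof.
case: w => a b; rewrite /nu /swap_neg /=.
have -> : ((- b, - a) == (1, -1)) = ((a, b) == (1, -1)).
  by rewrite !xpair_eqE; apply/idP/idP; lia.
have -> : (- b <= 0) && (0 <= - a) = (a <= 0) && (0 <= b) by apply/idP/idP; lia.
by have -> : (`|- b|%N + `|- a|%N = `|a|%N + `|b|%N)%N by lia.
Qed.

Definition relabel (c : int) (w : int * int) : int * int :=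
  if quadrant w then
    if w.2 < c then swap_neg w else (w.1 - c, w.2 - c)
  else w.

Definition relabel_inv (c : int) (w : int * int) : int * int :=
  if quadrant w then
    if - w.1 < c then swap_neg w else (w.1 + c, w.2 + c)
  else w.

Lemma relabel_bij (c : int) : 0 <= c -> bijective (relabel c).
Proof.
move=> c0; exists (relabel_inv c) => -[a b];
  rewrite /relabel /relabel_inv /quadrant /swap_neg /=.
- have [/andP[a0 b0]|/negbTE nq] := boolP ((a <= 0) && (0 <= b)); last by rewrite nq.
  have [bc|cb] := ltrP b c; rewrite /= ifT; try lia.
    by rewrite ifT ?opprK //; lia.
  by rewrite ifF; [congr pair; ring | lia].
- have [/andP[a0 b0]|/negbTE nq] := boolP ((a <= 0) && (0 <= b)); last by rewrite nq.
  have [ac|ca] := ltrP (- a) c; rewrite /= ifT; try lia.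
    by rewrite ifT ?opprK //; lia.
  by rewrite ifF; [congr pair; ring | lia].
Qed.

Lemma quadrant_relabel (c : int) (w : int * int) : 0 <= c ->
  quadrant w -> quadrant (relabel c w).
Proof.
case: w => a b c0 /andP[/= a0 b0].
by rewrite /relabel /quadrant /swap_neg /= a0 b0; case: ifP => /= ?; lia.
Qed.

Lemma nu_relabel (R : realType) (c : int) (w : int * int) : 0 <= c ->
  nu R (relabel c w) = nu R w.
Proof.
move=> c0; have [q|nq] := boolP (quadrant w); last by rewrite /relabel (negbTE nq).
rewrite !nu_quadrant ?quadrant_relabel //; congr (_ ^+ _).
case: w q => a b /andP[/= a0 b0].
by rewrite /relabel /quadrant /swap_neg /= a0 b0; case: ifP => /= ?; lia.
Qed.

Lemma zstep_quadrant (w : int * int) (z : int) : quadrant w ->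
  zstep w z = if 0 <= z then z + w.2 else if z < w.1 then z - w.1 else w.2.
Proof.
case: w => a b /andP[/= a0 b0]; rewrite /zstep /= opprK.
have -> : ((a, b) == (1, -1)) = false by rewrite xpair_eqE; lia.
by case: ifP => // _; case: ifP => // _; ring.
Qed.

Definition neg_part (z : int) : int := if z < 0 then - z else 0.

Lemma neg_part_ge0 (z : int) : 0 <= neg_part z.
Proof. by rewrite /neg_part; case: ifP => //; lia. Qed.

Lemma zstep_relabel (R : realType) (z : int) (w : int * int) : nu R w != 0 ->
  zstep (relabel (neg_part z) w) z = z + w.2.
Proof.
case/nu_support => [->|q]; first by rewrite /relabel /zstep.
rewrite zstep_quadrant ?quadrant_relabel ?neg_part_ge0 //.
case: w q => a b /andP[/= a0 b0].
rewrite /relabel /neg_part /quadrant /swap_neg /= a0 b0.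
case: (ltrP z 0) => z0; last by rewrite ltNge b0 /= subr0.
by case: (ltrP b (- z)) => bz /=; case: ifP => ?; lia.
Qed.

Lemma coal_pathP (inc : int -> int * int) (t : int) (n : nat) (z : nat -> int) :
  z 0%N = 0 ->
  (forall k, (k <= n)%N -> coal inc t k = z k) <->
  (forall k, (k < n)%N -> zstep (inc (t + k%:Z)) (z k) = z k.+1).
Proof.
move=> z0; split=> h k kn.
  by rewrite -(h k.+1 kn) /= (h k (ltnW kn)).
elim: k kn => [|k IHk] kn; first by rewrite z0.
by rewrite /= IHk ?h // ltnW.
Qed.

Local Open Scope ereal_scope.

Section countable_esum.
Variables (R : realType) (I : countType).

Lemma esum_pickle (f : I -> \bar R) (B : set I) : (forall i, 0 <= f i) ->
  \esum_(i in B) f i = \sum_(n <oo | n \in pickle @` B) oapp f 0 (unpickle n).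
Proof.
move=> f0; rewrite nneseries_esum; last by move=> n _; case: unpickle.
rewrite (_ : [set n | n \in pickle @` B] = pickle @` B); last first.
  by apply/seteqP; split=> n /=; rewrite inE.
rewrite (reindex_esum B _ pickle); last first.
  by apply: inj_bij => i j _ _; exact: (pcan_inj (@pickleK _)).
by apply: eq_esum => i _; rewrite pickleK.
Qed.

Lemma esumZl (x : R) (f : I -> \bar R) (B : set I) :
  (0 <= x)%R -> (forall i, 0 <= f i) ->
  \esum_(i in B) (x%:E * f i) = x%:E * \esum_(i in B) f i.
Proof.
move=> x0 f0; rewrite !esum_pickle //; last by move=> i; rewrite mule_ge0.
rewrite -nneseriesZl; last by move=> n _; case: unpickle.
by apply: eq_eseriesr => n _; case: unpickle => //=; rewrite mule0.
Qed.

Lemma measure_bigcup_countable d (T : measurableType d)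
    (mu : {measure set T -> \bar R}) (F : I -> set T) (B : set I) :
  (forall i, B i -> measurable (F i)) -> trivIset B F ->
  mu (\bigcup_(i in B) F i) = \esum_(i in B) mu (F i).
Proof.
move=> mF tF; pose G n := oapp F set0 (unpickle n).
have -> : \bigcup_(i in B) F i = \bigcup_(n in pickle @` B) G n.
  by rewrite bigcup_image; apply: eq_bigcupr => i _; rewrite /G pickleK.
rewrite measure_bigcup ?esum_pickle //.
- by apply: eq_eseriesr => n _; rewrite /G; case: unpickle => //=; rewrite measure0.
- by move=> _ [i Bi <-]; rewrite /G pickleK; exact: mF.
move=> _ _ [i Bi <-] [j Bj <-]; rewrite /G !pickleK => Fij.
by rewrite (tF i j Bi Bj Fij).
Qed.

End countable_esum.

Definition nu_mass (R : realType) (B : set (int * int)) : \bar R :=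
  \esum_(w in B) (nu R w)%:E.

Lemma nu_mass_ge0 (R : realType) (B : set (int * int)) : 0 <= nu_mass R B.
Proof. by apply: esum_ge0 => w _; rewrite lee_fin nu_ge0. Qed.

Lemma nu_mass_bij (R : realType) (e : int * int -> int * int) (A B : set (int * int)) :
  bijective e -> (forall w, nu R (e w) = nu R w) ->
  (forall w, (nu R w != 0)%R -> A (e w) <-> B w) -> nu_mass R A = nu_mass R B.
Proof.
move=> be nue AB; rewrite /nu_mass esum_mkcond [RHS]esum_mkcond.
rewrite (reindex_esum setT setT e); last by rewrite setTT_bijective.
apply: eq_esum => w _; rewrite nue.
have [->|nz] := eqVneq (nu R w) 0%R; first by case: ifP; case: ifP.
suff -> : (e w \in A) = (w \in B) by [].
by apply/idP/idP => /set_mem/(AB w nz) h; apply/mem_set.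
Qed.

Definition incW_in (T : Type) (X Y : int -> T -> int) (s : seq int)
    (B : nat -> set (int * int)) : set T :=
  [set om | forall k, (k < size s)%N -> B k (incW X Y om (nth 0%R s k))].

Definition incW_eq (T : Type) (X Y : int -> T -> int) (s : seq int)
    (v : seq (int * int)) : set T :=
  incW_in X Y s (fun k => [set nth (0, 0)%R v k]).

Lemma incW_in_nil (T : Type) (X Y : int -> T -> int) (B : nat -> set (int * int)) :
  incW_in X Y [::] B = setT.
Proof. by apply/seteqP; split=> om. Qed.

Lemma incW_in_cons (T : Type) (X Y : int -> T -> int) (x : int) (s : seq int)
    (B : nat -> set (int * int)) :
  incW_in X Y (x :: s) B =
  [set om | B 0%N (incW X Y om x)] `&` incW_in X Y s (fun k => B k.+1).
Proof.
apply/seteqP; split=> om /= => [h | [h0 h] [|k] // /h //].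
by split=> [|k ks]; [exact: h 0%N isT | exact: h k.+1 ks].
Qed.

Lemma preimage_bigcup_fibers (U V : Type) (f : U -> V) (B : set V) :
  [set x | B (f x)] = \bigcup_(v in B) [set x | f x = v].
Proof. by apply/seteqP; split=> [x Bx | x [v Bv /= ->]] //; exists (f x). Qed.

Section iid_increments.
Context d (T : measurableType d) (R : realType) (P : probability T R)
  (X Y : int -> T -> int).
Hypothesis iid : iid_steps_nu P X Y.

Lemma measurable_incW (l : int) (B : set (int * int)) :
  measurable [set om | B (incW X Y om l)].
Proof.
rewrite preimage_bigcup_fibers bigcup_mkcond; apply: countable_bigcupT_measurable => [|w].
  exact: countableP.
by case: ifP => _; [exact: iid.1 | exact: measurable0].
Qed.

Lemma prob_incW (l : int) (B : set (int * int)) :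
  P [set om | B (incW X Y om l)] = nu_mass R B.
Proof.
rewrite preimage_bigcup_fibers measure_bigcup_countable; last 2 first.
- by move=> w _; exact: iid.1.
- by move=> w w' _ _ [om [/= <- <-]].
apply: eq_esum => w _; have := iid.2 [:: l] [:: w] erefl erefl.
rewrite big_ord1 /= => <-; congr (P _).
by apply/seteqP; split=> om /= => [h [|k] //|/(_ 0%N isT)].
Qed.

Lemma nu_mass_fin (B : set (int * int)) : nu_mass R B \is a fin_num.
Proof.
rewrite -(prob_incW 0) ge0_fin_numE ?measure_ge0 //.
by rewrite (le_lt_trans (probability_le1 P (measurable_incW 0 B))) ?ltry.
Qed.

Lemma measurable_incW_in (s : seq int) (B : nat -> set (int * int)) :
  measurable (incW_in X Y s B).
Proof.
elim: s B => [|x s IHs] B; first by rewrite incW_in_nil.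
by rewrite incW_in_cons; apply: measurableI; [exact: measurable_incW | exact: IHs].
Qed.

Lemma incW_in_eq_cons (x : int) (s s' : seq int) (B : nat -> set (int * int))
    (v' : seq (int * int)) :
  incW_in X Y (x :: s) B `&` incW_eq X Y s' v' =
  \bigcup_(w in B 0%N)
    (incW_in X Y s (fun k => B k.+1) `&` incW_eq X Y (x :: s') (w :: v')).
Proof.
rewrite /incW_eq incW_in_cons; apply/seteqP; split=> om /=.
  by move=> [[B0 Bs] eqs']; exists (incW X Y om x) => //; split=> // -[|k] // /eqs'.
move=> [w Bw [Bs eqs']]; split; last by move=> k /(eqs' k.+1).
by split=> //; rewrite (eqs' 0%N isT).
Qed.

Lemma prob_incW_in_eq (s s' : seq int) (B : nat -> set (int * int))
    (v' : seq (int * int)) :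
  uniq (s ++ s') -> size v' = size s' ->
  P (incW_in X Y s B `&` incW_eq X Y s' v') =
  \big[*%E/1]_(k < size s) nu_mass R (B k) *
  (\prod_(k < size s') nu R (nth (0, 0) v' k))%:E.
Proof.
(* Fixing the value w at the first time x of s moves x into s'; then sum over w. *)
elim: s B s' v' => [|x s IHs] B s' v' uss' vs'.
  by rewrite incW_in_nil setTI big_ord0 mul1e; exact: iid.2.
have uss'x : uniq (s ++ x :: s') by rewrite -cat1s uniq_catCA.
rewrite incW_in_eq_cons measure_bigcup_countable; last 2 first.
- by move=> w _; apply: measurableI; exact: measurable_incW_in.
- by move=> w w' _ _ [om [[_ /(_ 0%N isT) /= <-] [_ /(_ 0%N isT) /= <-]]].
set c := \big[*%E/1]_(k < size s) nu_mass R (B k.+1).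
set Q := (\prod_(k < size s') nu R (nth (0, 0) v' k))%R.
have c_fin : c \is a fin_num.
  by apply: (big_ind (fun x => x \is a fin_num)) => // *;
    [exact: fin_numM | exact: nu_mass_fin].
have c_ge0 : 0 <= c.
  by apply: (big_ind (fun x => 0 <= x)) => // *; [exact: mule_ge0 | exact: nu_mass_ge0].
have Q_ge0 : (0 <= Q)%R by apply: prodr_ge0 => k _; exact: nu_ge0.
transitivity (\esum_(w in B 0%N) ((fine c * Q)%:E * (nu R w)%:E)).
  apply: eq_esum => w _ /=; rewrite IHs /= ?vs' // big_ord_recl.
  have -> : (\prod_(k < size s') nu R (nth (0, 0) (w :: v') (lift ord0 k)))%R = Q.
    by apply: eq_bigr => k _; rewrite lift0.
  rewrite -/c -(fineK c_fin) /= -!EFinM; congr EFin; ring.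
rewrite esumZl ?mulr_ge0 ?fine_ge0 // => [|w]; last by rewrite lee_fin nu_ge0.
rewrite -/(nu_mass R _) big_ord_recl -/c.
rewrite -(fineK c_fin) -(fineK (nu_mass_fin (B 0%N))) /= -!EFinM.
by congr EFin; ring.
Qed.

Lemma prob_incW_in (s : seq int) (B : nat -> set (int * int)) : uniq s ->
  P (incW_in X Y s B) = \big[*%E/1]_(k < size s) nu_mass R (B k).
Proof.
move=> us; have := @prob_incW_in_eq s [::] B [::]; rewrite cats0 => /(_ us erefl).
by rewrite /incW_eq incW_in_nil setIT big_ord0 mule1.
Qed.

End iid_increments.

Local Close Scope ereal_scope.

Theorem proposition3p3 (d : measure_display) (T : measurableType d)
    (R : realType) (P : probability T R) (X Y : int -> T -> int) :
  (forall om, X 0 om = 0 /\ Y 0 om = 0) ->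
  iid_steps_nu P X Y ->
  (* the step law of Y coincides with that of -X *)
  (forall k : int,
      P [set om | Y 1 om - Y 0 om = k] = P [set om | - (X 1 om - X 0 om) = k]) /\
  (* finite-dimensional distributions of (Z^{(t)}_s)_{s >= t} are those of a
     random walk started at 0 with the step law of the increments of Y *)
  (forall (t : int) (n : nat) (z : nat -> int), z 0%N = 0 ->
      P [set om | forall k, (k <= n)%N -> coal (incW X Y om) t k = z k]
      = \big[*%E/1%E]_(k < n) P [set om | Y 1 om - Y 0 om = z k.+1 - z k]).
Proof.
move=> _ iid.
have law_Y m : P [set om | Y 1 om - Y 0 om = m] = nu_mass R [set w | w.2 = m].
  exact: (prob_incW iid 0 [set w | w.2 = m]).
split=> [k | t n z z0].
  rewrite law_Y (prob_incW iid 0 [set w | - w.1 = k]).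
  by apply: nu_mass_bij (inv_bij swap_negK) (nu_swap_neg R) _ => -[a b].
pose C k := [set w | zstep w (z k) = z k.+1].
have -> : [set om | forall k, (k <= n)%N -> coal (incW X Y om) t k = z k] =
    incW_in X Y (mkseq (fun k => t + k%:Z) n) C.
  apply/seteqP; split=> om; rewrite /incW_in /= (coal_pathP _ _ _ z0) size_mkseq;
    by move=> h k kn; move: (h k kn); rewrite nth_mkseq.
rewrite (prob_incW_in iid) ?size_mkseq; last by rewrite mkseq_uniq // => i j /addrI [].
apply: eq_bigr => k _; rewrite law_Y.
have c_ge0 := neg_part_ge0 (z k).
apply: nu_mass_bij (relabel_bij c_ge0) (fun w => nu_relabel R w c_ge0) _ => w nw.
by rewrite /C /= (zstep_relabel _ nw); split=> h; lia.
Qed.
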